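(* Let $\mathfrak X=(\mathbb R,d_{\rm e},\mu)$, where $d_{\rm e}$ is the Euclidean metric and $\mu$ is a Borel measure such that every open interval (ball) has finite strictly positive measure. Then the noncentered maximal operator $\mathcal M_{\mathfrak X}$ possesses the dichotomy property.
   Context: $L^1_{\rm loc}(\mu)$: functions integrable on every open ball. $\mathcal Mf(x)=\sup_{B\ni x}\mu(B)^{-1}\int_B|f|d\mu$ over open balls containing $x$. $\mathcal M$ possesses the dichotomy property if for every $f\in L^1_{\rm loc}(\mu)$ either $\mu(\{\mathcal Mf=\infty\})=0$ or $\mathcal Mf(x)=\infty$ for all $x\in X$. *)

From HB Require Import structures.
From mathcomp Require Import all_boot all_order all_algebra.
From mathcomp Require Import all_classical all_reals all_analysis.
Set Implicit Arguments. Unset Strict Implicit. Unset Printing Implicit Defensive.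
Import Order.TTheory GRing.Theory Num.Theory.
Import numFieldNormedType.Exports.
Local Open Scope classical_set_scope.
Local Open Scope ring_scope.
Local Open Scope ereal_scope.

Definition ball_avg (R : realType) (mu : {measure set R -> \bar R})
  (f : R -> R) (c r : R) : \bar R :=
  ((fine (mu (ball c r)))^-1)%:E * \int[mu]_(y in ball c r) (`|f y|)%:E.

Definition maxop (R : realType) (mu : {measure set R -> \bar R})
  (f : R -> R) (x : R) : \bar R :=
  ereal_sup [set a : \bar R | exists (c r : R),
    [/\ (0 < r)%R, ball c r x & a = ball_avg mu f c r]].

Definition L1loc (R : realType) (mu : {measure set R -> \bar R})
  (f : R -> R) : Prop :=
  forall (c r : R), (0 < r)%R -> mu.-integrable (ball c r) (EFin \o f).

Definition dichotomy (R : realType) (mu : {measure set R -> \bar R}) : Prop :=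
  forall f : R -> R, L1loc mu f ->
    mu [set x | maxop mu f x = +oo] = 0 \/ (forall x : R, maxop mu f x = +oo).

From HB Require Import structures.
From mathcomp Require Import all_boot all_order all_algebra.
From mathcomp Require Import all_classical all_reals all_analysis.
From mathcomp Require Import measurable_realfun ring lra.
Import Order.TTheory GRing.Theory Num.Theory.
Import numFieldNormedType.Exports.
Set Implicit Arguments. Unset Strict Implicit. Unset Printing Implicit Defensive.
Local Open Scope classical_set_scope.
Local Open Scope ring_scope.
Local Open Scope ereal_scope.

(* Suppose Mf(y0) = K < oo and lam is large. If a ball B meets ball y0 N and
   the average of |f| on B exceeds lam, then the shortest interval H containing
   B and ]y0 - 1, y0 + 1[ has average at most K and lies in B u ball y0 (N + 1);
   hence (lam - K) mu(B) < K mu(ball y0 (N + 1)), which forbids B to contain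
   either unit ball adjacent to ball y0 (N + 1), i.e. B lies in ball y0 (N + 2).
   On the line, a finite family of intervals has an irredundant subfamily with
   the same union, and an irredundant family covers each point at most twice.
   Exhausting {Mf = oo} n ball y0 N by countably many finite unions of such
   balls gives lam mu({Mf = oo} n ball y0 N) <= 2 int_(ball y0 (N + 2)) |f|
   for every large lam. *)

Section real_balls.
Variable R : realType.
Implicit Types (c r x : R).
Local Open Scope ring_scope.

Lemma ball_itvP c r x : ball c r x <-> c - r < x < c + r.
Proof. by rewrite ball_itv /= in_itv. Qed.

Lemma ball_midP (lo hi x : R) : ball ((lo + hi) / 2) ((hi - lo) / 2) x <-> lo < x < hi.
Proof. by rewrite ball_itvP; split => /andP[? ?]; apply/andP; split; lra. Qed.

Lemma exists_hull_ball (c r y0 N x : R) : 0 < r -> ball c r x -> ball y0 N x ->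
  exists c' r', [/\ 0 < r', ball c' r' y0, ball c r `<=` ball c' r'
                  & ball c' r' `<=` ball c r `|` ball y0 (N + 1)].
Proof.
move=> r0 /ball_itvP/andP[? ?] /ball_itvP/andP[? ?].
set lo := Num.min (c - r) (y0 - 1); set hi := Num.max (c + r) (y0 + 1).
have [lo1 lo2] : lo <= c - r /\ lo <= y0 - 1 by split; rewrite ge_min lexx ?orbT.
have [hi1 hi2] : c + r <= hi /\ y0 + 1 <= hi by split; rewrite le_max lexx ?orbT.
exists ((lo + hi) / 2), ((hi - lo) / 2); split; first lra.
- by apply/ball_midP/andP; split; lra.
- by move=> w /ball_itvP/andP[? ?]; apply/ball_midP/andP; split; lra.
move=> w /ball_midP/andP[]; rewrite gt_min lt_max => lo_w w_hi.
have [wl|wl] := leP w (c - r); [right | have [wr|wr] := leP (c + r) w; [right | left]];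
  apply/ball_itvP/andP; move: lo_w w_hi => /orP[?|?] /orP[?|?]; split; lra.
Qed.

Lemma ball_sub_or_sup_unit_ball (c r y0 N x : R) : ball c r x -> ball y0 N x ->
  [\/ ball c r `<=` ball y0 (N + 2), ball (y0 + N + 1) 1 `<=` ball c r
    | ball (y0 - N - 1) 1 `<=` ball c r].
Proof.
move=> /ball_itvP/andP[? ?] /ball_itvP/andP[? ?].
have [cr|cr] := ltP (y0 + N + 2) (c + r); first by apply: Or32 => w /ball_itvP/andP[? ?];
  apply/ball_itvP/andP; split; lra.
have [cl|cl] := ltP (c - r) (y0 - N - 2); first by apply: Or33 => w /ball_itvP/andP[? ?];
  apply/ball_itvP/andP; split; lra.
by apply: Or31 => w /ball_itvP/andP[? ?]; apply/ball_itvP/andP; split; lra.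
Qed.

Lemma ball_sub_extremal_balls (p q e : R * R) y :
  ball p.1 p.2 y -> ball q.1 q.2 y ->
  p.1 - p.2 <= e.1 - e.2 -> e.1 + e.2 <= q.1 + q.2 ->
  ball e.1 e.2 `<=` ball p.1 p.2 `|` ball q.1 q.2.
Proof.
move=> /ball_itvP/andP[? ?] /ball_itvP/andP[? ?] ? ? w /ball_itvP/andP[? ?].
by have [wy|wy] := leP w y; [left|right]; apply/ball_itvP/andP; split; lra.
Qed.

End real_balls.

Section finite_ball_covers.
Variable R : realType.
Implicit Types (s t : seq (R * R)) (b : R * R) (c r x : R).
Local Open Scope ring_scope.

Definition cover_balls s : set R := \big[setU/set0]_(b <- s) ball b.1 b.2.

Lemma cover_balls_cons b s : cover_balls (b :: s) = ball b.1 b.2 `|` cover_balls s.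
Proof. by rewrite /cover_balls big_cons. Qed.

Lemma cover_ballsP s x :
  cover_balls s x <-> exists2 b, b \in s & ball b.1 b.2 x.
Proof.
elim: s => [|b s IH]; first by rewrite /cover_balls big_nil; split => [[]|[]].
rewrite cover_balls_cons; split.
  case=> [bx|/IH[b' b's b'x]]; first by exists b; rewrite ?mem_head.
  by exists b'; rewrite // inE b's orbT.
move=> [b']; rewrite inE => /orP[/eqP -> bx|b's b'x]; first by left.
by right; apply/IH; exists b'.
Qed.

Lemma sub_cover_balls s b : b \in s -> ball b.1 b.2 `<=` cover_balls s.
Proof. by move=> bs x bx; apply/cover_ballsP; exists b. Qed.

Lemma cover_balls_undup s : cover_balls (undup s) = cover_balls s.
Proof.
by apply/seteqP; split => x /cover_ballsP[b bs bx]; apply/cover_ballsP;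
  exists b; rewrite ?mem_undup in bs *.
Qed.

Lemma measurable_cover_balls s : measurable (cover_balls s).
Proof. by apply: bigsetU_measurable => b _; exact: measurable_ball. Qed.

Lemma measure_cover_balls_le (mu : {measure set R -> \bar R}) s :
  (mu (cover_balls s) <= \sum_(b <- s) mu (ball b.1 b.2))%E.
Proof.
elim: s => [|b s IH]; first by rewrite /cover_balls !big_nil measure0.
rewrite cover_balls_cons big_cons.
apply: le_trans (measureU2 _ (measurable_ball _ _) (measurable_cover_balls _)) _.
exact: leeD.
Qed.

Definition irredundant t :=
  forall b, b \in t -> ~ (ball b.1 b.2 `<=` cover_balls (rem b t)).

Lemma exists_irredundant_subfamily s :
  exists t, [/\ {subset t <= s}, uniq t, cover_balls t = cover_balls s
             & irredundant t].
Proof.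
rewrite -cover_balls_undup.
have: uniq (undup s) by exact: undup_uniq.
have sub : {subset undup s <= s} by move=> b; rewrite mem_undup.
move: (undup s) sub => u; move: {2}(size u) (leqnn (size u)) => n.
elim: n u => [|n IH] u sz us uu.
  by move: sz; rewrite leqn0 => /nilP ->; exists [::]; split => // b; rewrite in_nil.
have [irr|] := pselect (irredundant u); first by exists u.
move=> /existsNP[b /not_implyP[bu /contrapT sb]].
have szb : (size (rem b u) <= n)%N by rewrite size_rem //; case: (size u) sz.
have [|t [tu ut tE irr]] := IH (rem b u) szb _ (rem_uniq _ uu).
  by move=> y /mem_rem /us.
exists t; split => //.
rewrite tE [RHS]/cover_balls (perm_big _ (perm_to_rem bu)) big_cons -/(cover_balls _).
by apply/seteqP; split => x; [right | case=> // /sb].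
Qed.

Lemma exists_extremal_balls s : s != [::] ->
  exists p q, [/\ p \in s, q \in s & forall e, e \in s ->
     p.1 - p.2 <= e.1 - e.2 /\ e.1 + e.2 <= q.1 + q.2].
Proof.
elim: s => // e s IH _.
have [->|sn] := eqVneq s [::].
  exists e, e; split; rewrite ?mem_seq1 // => e'; rewrite mem_seq1 => /eqP ->; lra.
have [p [q [ps qs H]]] := IH sn.
exists (if e.1 - e.2 < p.1 - p.2 then e else p).
exists (if q.1 + q.2 < e.1 + e.2 then e else q).
split.
- by case: ifP => _; rewrite inE ?eqxx ?ps ?orbT.
- by case: ifP => _; rewrite inE ?eqxx ?qs ?orbT.
move=> e'; rewrite inE => /orP[/eqP ->|/H [h1 h2]].
  by split; case: ifPn => h; rewrite ?lexx //; rewrite -leNgt in h.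
by split; case: ifPn => h //; lra.
Qed.

(* Among the balls containing a point, only the two reaching furthest to the
   left and to the right can survive in an irredundant family. *)
Lemma irredundant_count_le2 t y : uniq t -> irredundant t ->
  (count (fun b : R * R => y \in (ball b.1 b.2 : set R)) t <= 2)%N.
Proof.
move=> ut irr; rewrite leqNgt; apply/negP => c3.
set ty := [seq b <- t | y \in (ball b.1 b.2 : set R)].
have szty : size ty = count (fun b : R * R => y \in (ball b.1 b.2 : set R)) t.
  by rewrite size_filter.
have tyn : ty != [::] by apply: contraTneq c3 => tyE; rewrite -szty tyE.
have [p [q [pty qty ext]]] := exists_extremal_balls tyn.
have [e ety [ep eq]] : exists2 e, e \in ty & e != p /\ e != q.
  apply/not_exists2P => hn.
  have sub : {subset ty <= [:: p; q]}.
    move=> e ety; rewrite !inE; apply/negPn/negP => /norP[ep eq].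
    by case: (hn e) => h; apply: h.
  by move: c3; rewrite -szty ltnNge (uniq_leq_size (filter_uniq _ ut) sub).
have [pe eq'] := ext e ety.
move: pty qty ety; rewrite !mem_filter => /andP[yp pt] /andP[yq qt] /andP[_ et].
apply: (irr e et) => w /(ball_sub_extremal_balls (set_mem yp) (set_mem yq) pe eq').
by case=> wb; apply: (sub_cover_balls _ wb); rewrite (mem_rem_uniq _ ut) inE eq_sym ?ep ?eq.
Qed.

End finite_ball_covers.

Section ball_families.
Variables (R : realType) (mu : {measure set R -> \bar R}).
Variables (J : set R) (g : R -> \bar R).
Hypotheses (mJ : measurable J) (mg : measurable_fun J g) (g0 : forall y, 0 <= g y).

Lemma sum_patch_irredundant_le t y : uniq t -> irredundant t ->
  \sum_(b <- t) (g \_ (ball b.1 b.2)) y <= g y *+ 2.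
Proof.
move=> ut irr; rewrite (eq_bigr (fun b : R * R =>
  if y \in (ball b.1 b.2 : set R) then g y else 0)); last by move=> b _; rewrite patchE.
rewrite -big_mkcond big_const_seq mule2n.
have := irredundant_count_le2 y ut irr.
case: (count _ t) => [|[|[|n]]] //= _.
- exact: adde_ge0.
- by rewrite adde0 leeDl.
- by rewrite adde0.
Qed.

Lemma sum_integral_irredundant_le t : uniq t -> irredundant t ->
  (forall b, b \in t -> ball b.1 b.2 `<=` J) ->
  \sum_(b <- t) \int[mu]_(y in ball b.1 b.2) g y <= (\int[mu]_(y in J) g y) *+ 2.
Proof.
move=> ut irr tJ.
have mgB (b : R * R) : measurable_fun J (g \_ (ball b.1 b.2)).
  apply/(measurable_restrict _ (measurable_ball _ _) mJ).
  exact: measurable_funS mJ (@subIsetl _ _ _) mg.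
rewrite big_seq (eq_bigr (fun b => \int[mu]_(y in J) (g \_ (ball b.1 b.2)) y)); last first.
  by move=> b bt; rewrite -integral_mkcondr (setIidr (tJ b bt)).
rewrite -big_seq -ge0_integral_sum //; last by move=> b y _; rewrite patchE; case: ifP.
rewrite mule2n -ge0_integralD //; apply: ge0_le_integral => //.
- by move=> y _; apply: sume_ge0 => b _; rewrite patchE; case: ifP.
- exact: emeasurable_sum.
- exact: emeasurable_funD.
- by move=> y _; rewrite -mule2n; exact: sum_patch_irredundant_le.
Qed.

Lemma measure_cover_balls_le_integral (lam : R) s : (0 <= lam)%R ->
  (forall b, b \in s -> ball b.1 b.2 `<=` J /\
     lam%:E * mu (ball b.1 b.2) <= \int[mu]_(y in ball b.1 b.2) g y) ->
  lam%:E * mu (cover_balls s) <= (\int[mu]_(y in J) g y) *+ 2.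
Proof.
move=> lam0 good.
have [t [ts ut <- irr]] := exists_irredundant_subfamily s.
apply: le_trans (sum_integral_irredundant_le ut irr (fun b bt => (good b (ts b bt)).1)).
apply: le_trans (_ : lam%:E * \sum_(b <- t) mu (ball b.1 b.2) <= _).
  by apply: lee_pmul => //; rewrite ?lee_fin ?measure_ge0 ?measure_cover_balls_le.
rewrite ge0_sume_distrr; last by move=> b _; exact: measure_ge0.
by rewrite !big_seq; apply: lee_sum => b /ts /good[].
Qed.

End ball_families.

Section countable_reduction.
Variables (R : realType) (mu : {measure set R -> \bar R}) (Good : set (R * R)).

Definition rat_ball (n : nat) : set R :=
  if unpickle n is Some pq then
    let I := ball ((ratr pq.1 + ratr pq.2) / 2 : R)%R ((ratr pq.2 - ratr pq.1) / 2)%R in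
    if `[< exists2 b, Good b & I `<=` ball b.1 b.2 >] then I else set0
  else set0.

Definition rat_cover (n : nat) : set R := \big[setU/set0]_(i < n) rat_ball i.

Lemma measurable_rat_cover n : measurable (rat_cover n).
Proof.
apply: bigsetU_measurable => i _; rewrite /rat_ball.
case: unpickle => [pq|//]; case: asboolP => _ //; exact: measurable_ball.
Qed.

Lemma rat_cover_nondecreasing : {homo rat_cover : n m / (n <= m)%N >-> (n <= m)%O}.
Proof.
move=> n m; rewrite subsetEset; elim: m => [|m IH]; first by rewrite leqn0 => /eqP ->.
rewrite leq_eqVlt => /orP[/eqP -> //|]; rewrite ltnS => /IH nm x /nm nx.
by rewrite /rat_cover big_ord_recr /=; left.
Qed.

Lemma rat_cover_sub_cover_balls n :
  exists2 s, (forall b, b \in s -> Good b) & rat_cover n `<=` cover_balls s.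
Proof.
elim: n => [|n [s sG sub]]; first by exists [::] => //; rewrite /rat_cover big_ord0.
rewrite /rat_cover big_ord_recr /= -/(rat_cover n) /rat_ball.
case: unpickle => [pq|]; last by exists s => // x [/sub|].
case: asboolP => [[b Gb bsub]|_]; last by exists s => // x [/sub|].
exists (b :: s); first by move=> b'; rewrite inE => /orP[/eqP ->|/sG].
by rewrite cover_balls_cons => x [/sub|/bsub]; [right|left].
Qed.

Lemma bigcup_good_sub_rat_cover :
  \bigcup_(b in Good) ball b.1 b.2 `<=` \bigcup_n rat_cover n.
Proof.
move=> x [b Gb /ball_itvP/andP[bx xb]].
have [p] := rat_in_itvoo bx; rewrite in_itv /= => /andP[bp px].
have [q] := rat_in_itvoo xb; rewrite in_itv /= => /andP[xq qb].
exists (pickle (p, q)).+1 => //.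
rewrite /rat_cover big_ord_recr /=; right; rewrite /rat_ball pickleK /=.
case: asboolP => [_|[]]; first by apply/ball_midP/andP; split.
exists b => // w /ball_midP/andP[pw wq]; apply/ball_itvP/andP; split; lra.
Qed.

Lemma measure_le_finite_good_covers (A : set R) (eps : \bar R) :
  measurable A -> A `<=` \bigcup_(b in Good) ball b.1 b.2 ->
  (forall s, (forall b, b \in s -> Good b) -> mu (cover_balls s) <= eps) ->
  mu A <= eps.
Proof.
move=> mA AG sG.
have mcup : measurable (\bigcup_n rat_cover n).
  by apply: bigcupT_measurable => n; exact: measurable_rat_cover.
apply: le_trans (le_measure _ _ _ (subset_trans AG bigcup_good_sub_rat_cover)) _;
  rewrite ?inE //.
have cvg_mu := nondecreasing_cvg_mu (mu := mu) measurable_rat_cover mcup rat_cover_nondecreasing.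
apply: (@le_trans _ _ (lim ((mu \o rat_cover) n @[n --> \oo]))).
  by rewrite (cvg_lim (@ereal_hausdorff R) cvg_mu).
apply: lime_le; first by apply/cvg_ex; eexists; exact: cvg_mu.
apply: nearW => n /=; have [s sGood sub] := rat_cover_sub_cover_balls n.
apply: le_trans (sG s sGood); apply: le_measure => //; rewrite inE //.
- exact: measurable_rat_cover.
- exact: measurable_cover_balls.
Qed.

End countable_reduction.

Section maximal_operator.
Variables (R : realType) (mu : {measure set R -> \bar R}) (f : R -> R).
Implicit Types (a : \bar R) (c r x : R).

Lemma ball_avg_ge0 c r : 0 <= ball_avg mu f c r.
Proof.
apply: mule_ge0; last by apply: integral_ge0 => y _; rewrite lee_fin.
by rewrite lee_fin invr_ge0 fine_ge0 //; exact: measure_ge0.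
Qed.

Lemma maxop_ge_avg c r x : (0 < r)%R -> ball c r x ->
  ball_avg mu f c r <= maxop mu f x.
Proof. by move=> r0 cx; apply: ereal_sup_ubound; exists c, r. Qed.

Lemma maxop_ge0 x : 0 <= maxop mu f x.
Proof. by apply: le_trans (maxop_ge_avg ltr01 (ballxx x ltr01)); exact: ball_avg_ge0. Qed.

Lemma maxop_gtP a x :
  a < maxop mu f x -> exists c r, [/\ (0 < r)%R, ball c r x & a < ball_avg mu f c r].
Proof. by move=> /ereal_sup_gt[_ [c [r [r0 cx ->]]] ?]; exists c, r. Qed.

Lemma open_maxop_gt a : open [set x | a < maxop mu f x].
Proof.
rewrite openE => x /maxop_gtP[c [r [r0 cx avg_gt]]].
apply: (@filterS _ _ _ (ball c r)); last by move: (ball_open c r); rewrite openE => /(_ x cx).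
by move=> y cy; apply: lt_le_trans avg_gt (maxop_ge_avg r0 cy).
Qed.

Lemma maxop_infty_bigcap :
  [set x | maxop mu f x = +oo] = \bigcap_n [set x | n%:R%:E < maxop mu f x].
Proof.
apply/seteqP; split => [x /= xinf n _|x gtn]; first by rewrite /= xinf ltry.
move: (gtn (Num.truncn (fine (maxop mu f x))).+1 I) (maxop_ge0 x) => /=.
case: (maxop mu f x) => [a|//|//] /=; rewrite lte_fin => a_lt _.
by have := lt_trans a_lt (truncnS_gt a); rewrite ltxx.
Qed.

Lemma measurable_maxop_infty : measurable [set x | maxop mu f x = +oo].
Proof.
rewrite maxop_infty_bigcap; apply: bigcapT_measurable => n.
by apply: open_measurable; exact: open_maxop_gt.
Qed.

End maximal_operator.

Section locally_integrable.
Variables (R : realType) (mu : {measure set R -> \bar R}) (f : R -> R).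
Hypothesis mu_ball : forall c r : R, (0 < r)%R -> 0 < mu (ball c r) < +oo.
Hypothesis f_loc : L1loc mu f.
Implicit Types (c r x : R).

Let absf y : \bar R := (`|f y|)%:E.

Lemma ball_measureE c r : (0 < r)%R -> mu (ball c r) = (fine (mu (ball c r)))%:E.
Proof. by move=> r0; have /andP[m0 mfin] := mu_ball c r0; rewrite fineK // ge0_fin_numE // ltW. Qed.

Lemma fine_ball_measure_gt0 c r : (0 < r)%R -> (0 < fine (mu (ball c r)))%R.
Proof. by move=> r0; apply: fine_gt0; exact: mu_ball. Qed.

Lemma measurable_fun_abs_ball c r : (0 < r)%R -> measurable_fun (ball c r) absf.
Proof.
move=> r0; have /integrableP[/measurable_EFinP mf _] := f_loc c r0.
apply/measurable_EFinP; exact: measurableT_comp (@normr_measurable R setT) mf.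
Qed.

Lemma integral_abs_ballE c r : (0 < r)%R ->
  \int[mu]_(y in ball c r) absf y = (fine (\int[mu]_(y in ball c r) absf y))%:E.
Proof.
move=> r0; have /integrableP[_ ilty] := f_loc c r0.
rewrite fineK // ge0_fin_numE; last by apply: integral_ge0 => y _; rewrite lee_fin.
exact: ilty.
Qed.

Lemma integral_ball_le_maxop c r x : (0 < r)%R -> ball c r x ->
  \int[mu]_(y in ball c r) absf y <= maxop mu f x * mu (ball c r).
Proof.
move=> r0 cx; apply: (@le_trans _ _ (ball_avg mu f c r * mu (ball c r))).
  2: by apply: lee_wpmul2r; [exact: measure_ge0 | exact: maxop_ge_avg].
rewrite /ball_avg [X in _ <= _ * X]ball_measureE // [in X in _ <= X]integral_abs_ballE //.
by rewrite -!EFinM mulrAC mulVf ?mul1r -?integral_abs_ballE // gt_eqF ?fine_ball_measure_gt0.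
Qed.

Lemma ball_avg_gt_integral (lam : R) c r : (0 < r)%R -> lam%:E < ball_avg mu f c r ->
  lam%:E * mu (ball c r) < \int[mu]_(y in ball c r) absf y.
Proof.
move=> r0; rewrite /ball_avg ball_measureE // integral_abs_ballE // -!EFinM !lte_fin.
by rewrite ltr_pdivlMl ?fine_ball_measure_gt0 // mulrC.
Qed.

Section bounded_at_point.
Variables (y0 K : R).
Hypotheses (maxop_y0 : maxop mu f y0 <= K%:E) (K0 : (0 <= K)%R).

Lemma large_average_ball_sub (N C m lam c r x : R) :
  mu (ball y0 (N + 1)%R) <= C%:E ->
  m%:E <= mu (ball (y0 + N + 1)%R 1) -> m%:E <= mu (ball (y0 - N - 1)%R 1) ->
  (K <= lam)%R -> (K * C < (lam - K) * m)%R ->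
  (0 < r)%R -> ball c r x -> ball y0 N x ->
  lam%:E * mu (ball c r) < \int[mu]_(y in ball c r) absf y ->
  ball c r `<=` ball y0 (N + 2)%R.
Proof.
move=> muC mR mL Klam KCm r0 cx y0x lam_lt.
have [c' [r' [r'0 hull_y0 sub_hull hull_sub]]] := exists_hull_ball r0 cx y0x.
have int_le : \int[mu]_(y in ball c r) absf y <= K%:E * (mu (ball c r) + C%:E).
  apply: (@le_trans _ _ (\int[mu]_(y in ball c' r') absf y)).
    apply: ge0_subset_integral => //; [exact: measurable_ball | exact: measurable_ball
      | exact: (@measurable_fun_abs_ball c' r' r'0) | by move=> y _; rewrite lee_fin].
  apply: le_trans (integral_ball_le_maxop r'0 hull_y0) _.
  apply: lee_pmul => //; first exact: maxop_ge0.
  apply: (@le_trans _ _ (mu (ball c r `|` ball y0 (N + 1)%R))).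
    by apply: le_measure hull_sub; rewrite inE; [|apply: measurableU];
      exact: measurable_ball.
  apply: le_trans (measureU2 _ (measurable_ball _ _) (measurable_ball _ _)) _.
  by rewrite leeD2l.
move: (lt_le_trans lam_lt int_le).
rewrite ball_measureE // -EFinD -!EFinM lte_fin => lt_KbC.
have no_unit c1 : ball c1 1 `<=` ball c r -> mu (ball c1 1) < m%:E.
  move=> sub; rewrite ltNge; apply/negP => mc1.
  have : m%:E <= mu (ball c r).
    by apply: le_trans mc1 _; apply: le_measure sub; rewrite inE; exact: measurable_ball.
  rewrite ball_measureE // lee_fin => m_le.
  move: lt_KbC m_le; set b := fine _; nra.
by case: (ball_sub_or_sup_unit_ball cx y0x) => [//| /no_unit | /no_unit];
  rewrite ltNge ?mR ?mL.
Qed.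

Lemma measure_maxop_infty_ball_le (N C m lam : R) : (0 < N)%R ->
  mu (ball y0 (N + 1)%R) <= C%:E ->
  m%:E <= mu (ball (y0 + N + 1)%R 1) -> m%:E <= mu (ball (y0 - N - 1)%R 1) ->
  (K < lam)%R -> (K * C < (lam - K) * m)%R ->
  lam%:E * mu ([set x | maxop mu f x = +oo] `&` ball y0 N) <=
    (\int[mu]_(y in ball y0 (N + 2)%R) absf y) *+ 2.
Proof.
move=> N0 muC mR mL Klam KCm.
have lam0 : (0 < lam)%R := le_lt_trans K0 Klam.
have N20 : (0 < N + 2)%R by rewrite addr_gt0.
rewrite -lee_pdivlMl //.
apply: (measure_le_finite_good_covers (Good := [set b : R * R |
  ball b.1 b.2 `<=` ball y0 (N + 2)%R /\
  lam%:E * mu (ball b.1 b.2) <= \int[mu]_(y in ball b.1 b.2) absf y])).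
- by apply: measurableI; [exact: measurable_maxop_infty | exact: measurable_ball].
- move=> x [/= xinf y0x].
  have /maxop_gtP[c [r [r0 cx lam_lt]]] : lam%:E < maxop mu f x by rewrite xinf ltry.
  have lam_int := ball_avg_gt_integral r0 lam_lt.
  exists (c, r) => //; split; last exact: ltW.
  exact: (large_average_ball_sub muC mR mL (ltW Klam) KCm r0 cx y0x).
- move=> s sGood; rewrite lee_pdivlMl //.
  apply: measure_cover_balls_le_integral => //.
  + exact: measurable_ball.
  + exact: (@measurable_fun_abs_ball y0 _ N20).
  + by move=> y; rewrite lee_fin.
  + exact: ltW.
Qed.

End bounded_at_point.

Lemma maxop_infty_ball_null (y0 N : R) : maxop mu f y0 < +oo -> (0 < N)%R ->
  mu ([set x | maxop mu f x = +oo] `&` ball y0 N) = 0.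
Proof.
move=> y0fin N0.
set K := fine (maxop mu f y0).
have K0 : (0 <= K)%R by apply: fine_ge0; exact: maxop_ge0.
have maxop_y0 : maxop mu f y0 <= K%:E by rewrite fineK // ge0_fin_numE ?maxop_ge0.
set C := fine (mu (ball y0 (N + 1)%R)).
have muC : mu (ball y0 (N + 1)%R) <= C%:E by rewrite -ball_measureE // addr_gt0.
set mR := fine (mu (ball (y0 + N + 1)%R 1)); set mL := fine (mu (ball (y0 - N - 1)%R 1)).
set m := Num.min mR mL.
have m0 : (0 < m)%R by rewrite lt_min !fine_ball_measure_gt0.
have muR : m%:E <= mu (ball (y0 + N + 1)%R 1) by rewrite ball_measureE // lee_fin ge_min lexx.
have muL : m%:E <= mu (ball (y0 - N - 1)%R 1).
  by rewrite ball_measureE // lee_fin ge_min lexx orbT.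
set I := fine (\int[mu]_(y in ball y0 (N + 2)%R) absf y).
have I0 : (0 <= I)%R by apply: fine_ge0; apply: integral_ge0 => y _; rewrite lee_fin.
apply/eqP; rewrite eq_le measure_ge0 andbT; apply/lee_addgt0Pr => eps eps0; rewrite add0e.
(* large enough for large_average_ball_sub and for 2 I <= lam eps *)
set lam := (K + 1 + K * C / m + 2 * I / eps)%R.
have C0 : (0 <= C)%R by apply: fine_ge0; exact: measure_ge0.
have KCm0 : (0 <= K * C / m)%R by rewrite divr_ge0 ?mulr_ge0 // ltW.
have Ieps0 : (0 <= 2 * I / eps)%R by rewrite divr_ge0 ?mulr_ge0 // ltW.
have Klam : (K < lam)%R by rewrite /lam; lra.
have KCm : (K * C < (lam - K) * m)%R.
  have -> : ((lam - K) * m = m + K * C + 2 * I / eps * m)%R.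
    by rewrite /lam; field; rewrite !gt_eqF.
  have : (0 <= 2 * I / eps * m)%R by rewrite mulr_ge0 // ltW.
  lra.
have I_le : (2 * I <= lam * eps)%R.
  have -> : (lam * eps = (K + 1 + K * C / m) * eps + 2 * I)%R.
    by rewrite /lam; field; rewrite !gt_eqF.
  have : (0 <= (K + 1 + K * C / m) * eps)%R by rewrite mulr_ge0 ?ltW //; lra.
  lra.
rewrite -(lee_pmul2l (x := lam%:E)) //; last by rewrite lte_fin (le_lt_trans K0 Klam).
apply: le_trans (measure_maxop_infty_ball_le maxop_y0 K0 N0 muC muR muL Klam KCm) _.
by rewrite integral_abs_ballE ?addr_gt0 // -/I -EFin_natmul -EFinM lee_fin mulr2n; lra.
Qed.

End locally_integrable.

Theorem proposition6p2p1 (R : realType) (mu : {measure set R -> \bar R}) :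
  (forall (c r : R), (0 < r)%R -> 0 < mu (ball c r) < +oo) ->
  dichotomy mu.
Proof.
move=> mu_ball f f_loc.
have [|/existsNP[y0 /eqP y0fin]] := pselect (forall x, maxop mu f x = +oo).
  by right.
left; set E := [set x | maxop mu f x = +oo].
have mEB N : measurable (E `&` ball y0 N.+1%:R).
  by apply: measurableI; [exact: measurable_maxop_infty | exact: measurable_ball].
have -> : E = \bigcup_N (E `&` ball y0 N.+1%:R).
  apply/seteqP; split=> [x Ex|x [N _ []]] //.
  exists (Num.truncn `|y0 - x|%R) => //; split => //.
  by rewrite -ball_normE /= truncnS_gt.
apply/negligibleP; first exact: bigcupT_measurable.
apply: negligible_bigcup => N; apply/negligibleP => //.
by apply: maxop_infty_ball_null; rewrite ?ltey.
Qed.
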